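(* Let $\Phi$ be a unit norm tight frame in $\mathbb{R}^d$ with $K$ atoms, frame constant $A=K/d$ and coherence $\mu$, and let $1\le S\le K$. Let $c\in\mathbb{R}^K$ with $c_1\ge c_2\ge\dots\ge c_K\ge0$ and $\|c\|_2=1$, let $x=c_{p,\sigma}$ with probability $(2^KK!)^{-1}$ for every permutation $p$ and sign sequence $\sigma$, and let $y=\Phi x$. Suppose that for all $\sigma,p$, $$\|P_{I_p}(\Phi)\Phi c_{p,\sigma}\|_2>\max_{|I|\le S,\ I\ne I_p}\|P_I(\Phi)\Phi c_{p,\sigma}\|_2,\qquad I_p:=p^{-1}(\{1,\dots,S\}).$$ Then $\Phi$ is a local maximum of $$\max_{\Psi\in\mathcal D}\ \mathbb{E}_y\Big(\max_{|I|\le S}\|P_I(\Psi)y\|_2^2\Big).$$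
   Context: $\mathcal D$ is the set of dictionaries $\Psi=(\psi_1,\dots,\psi_K)$, $\psi_i\in\mathbb{R}^d$, $\|\psi_i\|_2=1$. For $I\subseteq\{1,\dots,K\}$, $\Psi_I$ is the submatrix with columns $(\psi_i)_{i\in I}$ and $P_I(\Psi)=\Psi_I\Psi_I^\dagger$ is the orthogonal projection onto the span of $(\psi_i)_{i\in I}$ ($\dagger$ = Moore–Penrose pseudoinverse). Unit norm tight frame with frame constant $A$: $\sum_i|\langle\phi_i,v\rangle|^2=A\|v\|_2^2$ for all $v$; coherence $\mu=\max_{i\ne j}|\langle\phi_i,\phi_j\rangle|$. $c_{p,\sigma}(i)=\sigma_ic_{p(i)}$. *)

From HB Require Import structures.
From mathcomp Require Import all_boot all_order all_algebra all_fingroup.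
Set Implicit Arguments. Unset Strict Implicit. Unset Printing Implicit Defensive.
Import Order.TTheory GRing.Theory Num.Theory.
Local Open Scope ring_scope.

Definition norm2 {R : rcfType} {n : nat} (v : 'cV[R]_n) : R :=
  Num.sqrt (\sum_(i < n) v i 0 ^+ 2).

Definition dotv {R : rcfType} {n : nat} (u v : 'cV[R]_n) : R :=
  \sum_(i < n) u i 0 * v i 0.

(* Moore--Penrose pseudoinverse, via the full-rank factorisation
   A = col_base A *m row_base A  (A^+ = F^T (F F^T)^-1 (C^T C)^-1 C^T). *)
Definition pinv {R : rcfType} {m n : nat} (A : 'M[R]_(m, n)) : 'M[R]_(n, m) :=
  (row_base A)^T *m invmx (row_base A *m (row_base A)^T)
    *m invmx ((col_base A)^T *m col_base A) *m (col_base A)^T.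

Definition subcols {R : rcfType} {d K : nat} (Psi : 'M[R]_(d, K))
  (I : {set 'I_K}) : 'M[R]_(d, #|I|) :=
  colsub (fun j : 'I_#|I| => enum_val j) Psi.

Definition projI {R : rcfType} {d K : nat} (I : {set 'I_K})
  (Psi : 'M[R]_(d, K)) : 'M[R]_d :=
  subcols Psi I *m pinv (subcols Psi I).

Definition is_dict {R : rcfType} {d K : nat} (Psi : 'M[R]_(d, K)) : Prop :=
  forall i : 'I_K, norm2 (col i Psi) = 1.

Definition tight_frame {R : rcfType} {d K : nat} (Phi : 'M[R]_(d, K)) (A : R)
  : Prop :=
  forall v : 'cV[R]_d,
    \sum_(i < K) (dotv (col i Phi) v) ^+ 2 = A * norm2 v ^+ 2.

(* Coherence (not needed in the conclusion, recorded for completeness). *)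
Definition coherence {R : rcfType} {d K : nat} (Phi : 'M[R]_(d, K)) : R :=
  \big[Num.max/0]_(ij : 'I_K * 'I_K | ij.1 != ij.2)
     `|dotv (col ij.1 Phi) (col ij.2 Phi)|.

(* c_{p,sigma}(i) = sigma_i c_{p(i)}, sign sigma_i = (-1)^(s i). *)
Definition cps {R : rcfType} {K : nat} (c : 'cV[R]_K) (p : 'S_K)
  (s : {ffun 'I_K -> bool}) : 'cV[R]_K :=
  \col_i ((-1) ^+ s i * c (p i) 0).

(* I_p = p^{-1}({1,...,S}) (0-indexed: p i < S). *)
Definition Ip {K : nat} (S : nat) (p : 'S_K) : {set 'I_K} :=
  [set i | (p i < S)%N].

Definition best_proj {R : rcfType} {d K : nat} (S : nat) (Psi : 'M[R]_(d, K))
  (y : 'cV[R]_d) : R :=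
  \big[Num.max/0]_(I : {set 'I_K} | (#|I| <= S)%N) norm2 (projI I Psi *m y) ^+ 2.

Definition objective {R : rcfType} {d K : nat} (S : nat) (Phi : 'M[R]_(d, K))
  (c : 'cV[R]_K) (Psi : 'M[R]_(d, K)) : R :=
  ((2 ^ K * K`!)%:R)^-1 *
  \sum_(p : 'S_K) \sum_(s : {ffun 'I_K -> bool})
     best_proj S Psi (Phi *m cps c p s).

(* Local maximum over D (entrywise-max distance; all norms equivalent). *)
Definition local_max_on_D {R : rcfType} {d K : nat}
  (F : 'M[R]_(d, K) -> R) (Phi : 'M[R]_(d, K)) : Prop :=
  is_dict Phi /\
  exists2 eps : R, 0 < eps &
    forall Psi : 'M[R]_(d, K), is_dict Psi ->
      (forall i j, `|Psi i j - Phi i j| < eps) -> F Psi <= F Phi.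

From HB Require Import structures.
From mathcomp Require Import all_boot all_order all_algebra all_fingroup.
From mathcomp Require Import ring lra.
Set Implicit Arguments. Unset Strict Implicit. Unset Printing Implicit Defensive.
Import Order.TTheory GRing.Theory Num.Theory.
Local Open Scope ring_scope.

(* Write y = Phi c_{p,s}, I_p = p^-1 {0..S-1} and P_I(Psi) = Psi_I Psi_I^+.
   1. Linear algebra: P_I(Psi) is the orthogonal projection onto the span of
      the atoms in I, equal to Psi_I G^-1 Psi_I^T when the Gram matrix G is
      invertible.
   2. Averaging: summing over the signs kills cross terms; grouping the
      permutations by I = I_p, atom i gets a weight which is largest on I
      (c is decreasing) and constant off I, while sum_i ||P phi_i||^2 = A rank P
      by tightness.  So rank-S projections P_I do at most as well as P_I(Phi).
   3. Independence: strict separation makes any S atoms of Phi independent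
      (dropping an atom carrying a dependency would not change P_{I_p}).
   4. Continuity: by the adjugate formula, invertibility and strict separation
      persist near Phi.  There the objective of Psi averages ||P_{I_p}(Psi) y||^2,
      which by 2 is at most the average of ||P_{I_p}(Phi) y||^2, itself at most
      the objective of Phi. *)

Section OrthogonalProjections.
Variable R : rcfType.

Lemma rv_sq0 n (u : 'rV[R]_n) : (u *m u^T) 0 0 = 0 -> u = 0.
Proof.
rewrite !mxE => hs.
have H0 : forall i : 'I_n, true -> 0 <= u 0 i * u^T i 0.
  by move=> i _; rewrite mxE -expr2 sqr_ge0.
apply/rowP => j; rewrite mxE; have := psumr_eq0P H0 hs; move=> /(_ j isT); rewrite mxE -expr2.
by move/eqP; rewrite sqrf_eq0 => /eqP.
Qed.

Lemma gram_unit m n (M : 'M[R]_(m, n)) : row_free M -> (M *m M^T) \in unitmx.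
Proof.
move=> fM; rewrite unitmxE unitfE; apply/negP => /det0P [v v0 hv].
have vM : v *m M = 0.
  by apply: rv_sq0; rewrite trmx_mul mulmxA -(mulmxA v) hv mul0mx mxE.
by case/negP: v0; apply/eqP; apply: (row_free_inj fM); rewrite vM mul0mx.
Qed.

(* Two symmetric matrices that fix X and have range inside that of X
   coincide: an orthogonal projection is determined by its range. *)
Lemma proj_unique m n (P Q : 'M[R]_m) (X : 'M[R]_(m, n)) B B' :
  P^T = P -> Q^T = Q -> P *m X = X -> Q *m X = X ->
  P = X *m B -> Q = X *m B' -> P = Q.
Proof.
move=> sP sQ PX QX eP eQ.
have QP : Q *m P = P by rewrite eP mulmxA QX.
have PQ : P *m Q = Q by rewrite eQ mulmxA PX.
by rewrite -QP -[Q in Q *m P]sQ -[P in _ *m P]sP -trmx_mul PQ sQ.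
Qed.

Definition gram_proj m n (X : 'M[R]_(m, n)) : 'M[R]_m :=
  X *m invmx (X^T *m X) *m X^T.

Lemma gram_proj_sym m n (X : 'M[R]_(m, n)) : (gram_proj X)^T = gram_proj X.
Proof. by rewrite /gram_proj !trmx_mul trmxK trmx_inv trmx_mul trmxK mulmxA. Qed.

Lemma gram_proj_fix m n (X : 'M[R]_(m, n)) :
  (X^T *m X) \in unitmx -> gram_proj X *m X = X.
Proof. by move=> u; rewrite /gram_proj -!mulmxA mulVmx ?mulmx1. Qed.

Lemma gram_proj_idem m n (X : 'M[R]_(m, n)) :
  (X^T *m X) \in unitmx -> gram_proj X *m gram_proj X = gram_proj X.
Proof.
by move=> u; rewrite {2}/gram_proj -[X *m _ *m X^T]mulmxA mulmxA gram_proj_fix // mulmxA.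
Qed.

Lemma gram_proj_tr m n (X : 'M[R]_(m, n)) :
  (X^T *m X) \in unitmx -> \tr (gram_proj X) = n%:R.
Proof. by move=> u; rewrite /gram_proj mxtrace_mulC mulmxA mulmxV // mxtrace1. Qed.

(* Through the full-rank factorisation X = C F, the matrix X X^+ is the
   Gram projection of the column basis C. *)
Lemma pinv_proj m n (X : 'M[R]_(m, n)) : X *m pinv X = gram_proj (col_base X).
Proof.
rewrite /pinv /gram_proj.
have E := mulmx_base X; have uF := gram_unit (row_base_free X).
move: E uF; move: (col_base X) (row_base X) => C F E uF.
by rewrite -{1}E -!mulmxA; congr (_ *m _); rewrite !mulmxA mulmxV // mul1mx.
Qed.

Lemma col_base_gram_unit m n (X : 'M[R]_(m, n)) :
  ((col_base X)^T *m col_base X) \in unitmx.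
Proof.
have := gram_unit (_ : row_free (col_base X)^T); rewrite trmxK; apply.
by rewrite /row_free mxrank_tr; exact: col_base_full.
Qed.

Lemma pinv_proj_sym m n (X : 'M[R]_(m, n)) : (X *m pinv X)^T = X *m pinv X.
Proof. by rewrite pinv_proj gram_proj_sym. Qed.

Lemma pinv_proj_fix m n (X : 'M[R]_(m, n)) : (X *m pinv X) *m X = X.
Proof.
rewrite pinv_proj; have E := mulmx_base X; have u := col_base_gram_unit X.
move: E u; move: (col_base X) (row_base X) => C F E u.
by rewrite -{2 3}E mulmxA gram_proj_fix.
Qed.

Lemma pinv_proj_gram m n (X : 'M[R]_(m, n)) :
  (X^T *m X) \in unitmx -> X *m pinv X = gram_proj X.
Proof.
move=> u; apply: (proj_unique (B := pinv X) (B' := invmx (X^T *m X) *m X^T)).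
- exact: pinv_proj_sym.
- exact: gram_proj_sym.
- exact: pinv_proj_fix.
- exact: gram_proj_fix.
- by [].
- by rewrite /gram_proj mulmxA.
Qed.

Lemma pinv_proj_span m n1 n2 (X : 'M[R]_(m, n1)) (Y : 'M[R]_(m, n2)) M1 M2 :
  Y = X *m M1 -> X = Y *m M2 -> X *m pinv X = Y *m pinv Y.
Proof.
move=> hY hX.
apply: (proj_unique (X := X) (B := pinv X) (B' := M1 *m pinv Y)).
- exact: pinv_proj_sym.
- exact: pinv_proj_sym.
- exact: pinv_proj_fix.
- by rewrite {2}hX {1}hX mulmxA pinv_proj_fix.
- by [].
- by rewrite hY mulmxA.
Qed.
End OrthogonalProjections.

Section SquaredNorms.
Variable R : rcfType.

Definition sq n (v : 'cV[R]_n) : R := \sum_(k < n) v k 0 ^+ 2.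

Lemma sq_ge0 n (v : 'cV[R]_n) : 0 <= sq v.
Proof. by apply: sumr_ge0 => i _; rewrite sqr_ge0. Qed.

Lemma norm2_sq n (v : 'cV[R]_n) : norm2 v ^+ 2 = sq v.
Proof. by rewrite /norm2 sqr_sqrtr // sq_ge0. Qed.

Lemma sq_mx n (v : 'cV[R]_n) : sq v = (v^T *m v) 0 0.
Proof. by rewrite /sq mxE; apply: eq_bigr => k _; rewrite mxE expr2. Qed.

Lemma sq_proj_le n (P : 'M[R]_n) (v : 'cV[R]_n) :
  P^T = P -> P *m P = P -> sq (P *m v) <= sq v.
Proof.
move=> sP iP.
have pythagoras : sq v = sq (P *m v) + sq ((1%:M - P) *m v).
  have ea : forall (X Y : 'M[R]_1), X 0 0 + Y 0 0 = (X + Y) 0 0.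
    by move=> X Y; rewrite mxE.
  rewrite !sq_mx ea; congr (_ 0 0).
  have ht : (1%:M - P)^T = 1%:M - P by rewrite linearB /= trmx1 sP.
  have h1 : (1%:M - P) *m (1%:M - P) = 1%:M - P.
    by rewrite mulmxBl mul1mx mulmxBr mulmx1 iP subrr subr0.
  rewrite !trmx_mul sP ht !mulmxA -(mulmxA _ P P).
  rewrite -(mulmxA _ (1%:M - P) (1%:M - P)) iP h1.
  by rewrite -mulmxDl -mulmxDr addrC subrK mulmx1.
by rewrite pythagoras lerDl sq_ge0.
Qed.

Lemma tight_frame_trace d K (Phi : 'M[R]_(d, K)) (A : R) (P : 'M[R]_d) :
  tight_frame Phi A -> P^T = P -> P *m P = P ->
  \sum_i sq (P *m col i Phi) = A * \tr P.
Proof.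
move=> tf sP iP.
have sPe : forall a b, P a b = P b a by move=> a b; rewrite -{1}sP mxE.
have e1 : forall i k, (P *m col i Phi) k 0 = dotv (col i Phi) (col k P).
  move=> i k; rewrite /dotv mxE; apply: eq_bigr => l _.
  by rewrite !mxE mulrC sPe.
rewrite /sq exchange_big /=.
under eq_bigr => k _ do under eq_bigr => i _ do rewrite e1.
under eq_bigr => k _ do rewrite tf norm2_sq.
rewrite -big_distrr /=; congr (_ * _).
rewrite /mxtrace; apply: eq_bigr => k _.
rewrite -{2}iP mxE /sq; apply: eq_bigr => l _.
by rewrite mxE expr2 sPe.
Qed.
End SquaredNorms.

Section SignAveraging.
Variable R : rcfType.

Definition flip K (i : 'I_K) (s : {ffun 'I_K -> bool}) : {ffun 'I_K -> bool} :=
  [ffun x => if x == i then ~~ s x else s x].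

Lemma flipK K (i : 'I_K) : involutive (flip i).
Proof.
by move=> s; apply/ffunP => x; rewrite !ffunE; case: eqP => // _; rewrite negbK.
Qed.

Lemma sign_corr K (i j : 'I_K) :
  \sum_(s : {ffun 'I_K -> bool}) ((-1) ^+ s i * (-1) ^+ s j : R) =
  (i == j)%:R * (2 ^ K)%:R.
Proof.
case: eqP => [<-|/eqP ij].
  rewrite mul1r (eq_bigr (fun _ => 1)); last by move=> s _; rewrite -expr2 sqrr_sign.
  by rewrite sumr_const card_ffun card_bool card_ord.
rewrite mul0r; set T := \sum_s _.
have TN : T = - T.
  rewrite {1}/T (reindex_inj (inv_inj (@flipK K i))) /= -sumrN.
  apply: eq_bigr => s _; rewrite !ffunE eqxx eq_sym (negbTE ij).
  by case: (s i); rewrite /= ?expr0 ?expr1 ?mulN1r ?mul1r ?opprK.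
by move/eqP: TN; rewrite -addr_eq0 -mulr2n mulrn_eq0 /= => /eqP.
Qed.

Lemma sign_average_sq K (a : 'I_K -> R) :
  \sum_(s : {ffun 'I_K -> bool}) (\sum_i (-1) ^+ s i * a i) ^+ 2 =
  (2 ^ K)%:R * \sum_i a i ^+ 2.
Proof.
under eq_bigr => s _ do rewrite expr2 big_distrlr /=.
rewrite exchange_big /= big_distrr /=; apply: eq_bigr => i _.
rewrite exchange_big /= (bigD1 i) //= [X in _ + X]big1 ?addr0 => [|j ji].
  have := sign_corr i i; rewrite eqxx mul1r => <-.
  by rewrite mulr_suml; apply: eq_bigr => s _; ring.
rewrite (eq_bigr (fun s : {ffun 'I_K -> bool} =>
  ((-1) ^+ s i * (-1) ^+ s j) * (a i * a j))) => [|s _]; last by ring.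
by rewrite -mulr_suml sign_corr eq_sym (negbTE ji) !mul0r.
Qed.

Lemma sign_average_cps d K (M : 'M[R]_(d, K)) (c : 'cV[R]_K) (p : 'S_K) :
  \sum_(s : {ffun 'I_K -> bool}) sq (M *m cps c p s) =
  (2 ^ K)%:R * \sum_i c (p i) 0 ^+ 2 * sq (col i M).
Proof.
rewrite /sq exchange_big /=.
under eq_bigr => k _ do under eq_bigr => s _ do rewrite mxE.
under eq_bigr => k _ do under eq_bigr => s _ do
  under eq_bigr => i _ do rewrite mxE mulrC -mulrA.
under eq_bigr => k _ do rewrite sign_average_sq.
rewrite -big_distrr /=; congr (_ * _); rewrite exchange_big /=.
apply: eq_bigr => i _; rewrite big_distrr /=; apply: eq_bigr => k _.
by rewrite !mxE; ring.
Qed.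
End SignAveraging.

Section Supports.
Variables K S : nat.

Lemma card_lt_set : (S <= K)%N -> #|[set i : 'I_K | (i < S)%N]| = S.
Proof.
move=> SK.
have -> : [set i : 'I_K | (i < S)%N] = [set widen_ord SK i | i : 'I_S].
  apply/setP => x; rewrite inE; apply/idP/imsetP => [xS|[i _ ->]]; last exact: (ltn_ord i).
  by exists (Ordinal xS) => //; apply: val_inj.
by rewrite card_imset ?card_ord // => a b /(congr1 val) /= /val_inj.
Qed.

Lemma card_Ip (p : 'S_K) : (S <= K)%N -> #|Ip S p| = S.
Proof.
move=> SK; rewrite -[RHS](card_lt_set SK).
rewrite -(card_preimset [set i : 'I_K | (i < S)%N] (@perm_inj _ p)).
by apply: eq_card => x; rewrite !inE.
Qed.

Lemma Ip_tperm (I : {set 'I_K}) (j j0 : 'I_K) (q : 'S_K) :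
  j \notin I -> j0 \notin I -> Ip S q = I -> Ip S (tperm j j0 * q) = I.
Proof.
move=> jI j0I E; rewrite -E /Ip !inE in jI j0I *; apply/setP => x.
by rewrite !inE permM; case: tpermP => [->|->|//]; rewrite (negbTE jI) (negbTE j0I).
Qed.

(* Every set of at most S indices is contained in some support I_p: list
   I first, then its complement, and let p^-1 read off that list. *)
Lemma subset_Ip (I : {set 'I_K}) : (#|I| <= S)%N -> exists p : 'S_K, I \subset Ip S p.
Proof.
move=> IS; set e := enum I ++ enum (~: I).
have se : size e = K by rewrite size_cat -!cardE cardsC card_ord.
have ue : uniq e.
  rewrite cat_uniq !enum_uniq /= andbT; apply/hasPn => x; rewrite !mem_enum inE.
  by move=> /negbTE ->.
have ine : forall x, x \in e by move=> x; rewrite mem_cat !mem_enum inE orbN.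
pose q (x : 'I_K) := nth x e x.
have qinj : injective q.
  move=> x y; rewrite /q => h.
  have hx : (x < size e)%N by rewrite se ltn_ord.
  have hy : (y < size e)%N by rewrite se ltn_ord.
  rewrite (@set_nth_default _ e x y y hy) in h.
  by apply/val_inj/eqP; rewrite -(nth_uniq x hx hy ue) h.
exists (perm qinj)^-1%g; apply/subsetP => i iI.
have ki : (index i e < K)%N by move: (ine i); rewrite -index_mem se.
have qk : perm qinj (Ordinal ki) = i by rewrite permE /q nth_index.
rewrite inE -qk permK /= index_cat mem_enum iI.
by apply: leq_trans IS; rewrite cardE index_mem mem_enum.
Qed.
End Supports.

Lemma weighted_sum_ge0 (R : realDomainType) (T : finType) (A : {pred T})
    (w delta : T -> R) (w0 : R) :
  (forall i, i \in A -> w0 <= w i) -> (forall i, i \notin A -> w i = w0) ->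
  (forall i, i \in A -> 0 <= delta i) -> \sum_i delta i = 0 ->
  0 <= \sum_i w i * delta i.
Proof.
move=> wA wnA dA d0.
have -> : \sum_i w i * delta i = \sum_i (w i - w0) * delta i.
  by under [RHS]eq_bigr => i _ do rewrite mulrBl; rewrite sumrB -mulr_sumr d0 mulr0 subr0.
apply: sumr_ge0 => i _; case: (boolP (i \in A)) => iA.
  by rewrite mulr_ge0 ?subr_ge0 ?wA ?dA.
by rewrite wnA // subrr mul0r.
Qed.

Lemma col_mulmx (R : pzSemiRingType) m n p (A : 'M[R]_(m, n)) (B : 'M[R]_(n, p)) i :
  col i (A *m B) = A *m col i B.
Proof. by rewrite !colE mulmxA. Qed.

Section Averaging.
Variable R : rcfType.
Variables (K S : nat) (c : 'cV[R]_K).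
Hypothesis c_decr : forall i j : 'I_K, (i <= j)%N -> c j 0 <= c i 0.
Hypothesis c_ge0 : forall i : 'I_K, 0 <= c i 0.

Definition fibre_weight (I : {set 'I_K}) (i : 'I_K) : R :=
  \sum_(p : 'S_K | Ip S p == I) c (p i) 0 ^+ 2.

Lemma fibre_weight_ge0 (I : {set 'I_K}) (i : 'I_K) : 0 <= fibre_weight I i.
Proof. by apply: sumr_ge0 => p _; rewrite sqr_ge0. Qed.

Lemma fibre_weight_card (I : {set 'I_K}) (i : 'I_K) :
  (S <= K)%N -> #|I| != S -> fibre_weight I i = 0.
Proof.
move=> SK cI; apply: big_pred0 => p; apply/negbTE/eqP => E.
by case/eqP: cI; rewrite -E card_Ip.
Qed.

(* Off the support all atoms weigh the same: swap them by a transposition. *)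
Lemma fibre_weight_swap (I : {set 'I_K}) (j j0 : 'I_K) :
  j \notin I -> j0 \notin I -> fibre_weight I j = fibre_weight I j0.
Proof.
move=> jI j0I; rewrite /fibre_weight (reindex_inj (mulgI (tperm j j0))) /=.
apply: eq_big => [p|p _]; last by rewrite permM tpermL.
apply/eqP/eqP => [h|h]; last exact: Ip_tperm.
by have := Ip_tperm jI j0I h; rewrite mulgA tperm2 mul1g.
Qed.

(* Since c is decreasing, atoms in the support weigh at least as much as
   atoms outside it. *)
Lemma fibre_weight_mono (I : {set 'I_K}) (i j : 'I_K) :
  i \in I -> j \notin I -> fibre_weight I j <= fibre_weight I i.
Proof.
move=> iI jI; apply: ler_sum => p /eqP hp.
have pi : (p i < S)%N by move: iI; rewrite -hp inE.
have pj : ~~ (p j < S)%N by move: jI; rewrite -hp inE.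
have hc : c (p j) 0 <= c (p i) 0.
  by apply: c_decr; apply: ltnW; apply: leq_trans pi _; rewrite leqNgt.
by rewrite !expr2 ler_pM.
Qed.

Lemma fibre_decomp (f : {set 'I_K} -> 'I_K -> R) :
  \sum_(p : 'S_K) \sum_i c (p i) 0 ^+ 2 * f (Ip S p) i =
  \sum_(I : {set 'I_K}) \sum_i fibre_weight I i * f I i.
Proof.
rewrite (partition_big (Ip S) xpredT) //=; apply: eq_bigr => I _.
rewrite exchange_big /=; apply: eq_bigr => i _; rewrite mulr_suml.
by apply: eq_bigr => p /eqP ->.
Qed.

Lemma avg_ineq d (Phi : 'M[R]_(d, K)) (A : R) (P Q : {set 'I_K} -> 'M[R]_d) :
  (S <= K)%N -> tight_frame Phi A ->
  (forall I : {set 'I_K}, #|I| = S ->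
     [/\ (P I)^T = P I, P I *m P I = P I, (Q I)^T = Q I, Q I *m Q I = Q I
       & \tr (P I) = \tr (Q I)]) ->
  (forall I : {set 'I_K}, #|I| = S ->
     forall i, i \in I -> Q I *m col i Phi = col i Phi) ->
  \sum_(p : 'S_K) \sum_(s : {ffun 'I_K -> bool}) sq (P (Ip S p) *m (Phi *m cps c p s)) <=
  \sum_(p : 'S_K) \sum_(s : {ffun 'I_K -> bool}) sq (Q (Ip S p) *m (Phi *m cps c p s)).
Proof.
move=> SK tf hPQ hQ.
have avg : forall F : {set 'I_K} -> 'M[R]_d,
    \sum_(p : 'S_K) \sum_(s : {ffun 'I_K -> bool}) sq (F (Ip S p) *m (Phi *m cps c p s)) =
    (2 ^ K)%:R * \sum_I \sum_i fibre_weight I i * sq (F I *m col i Phi).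
  move=> F; rewrite -fibre_decomp big_distrr; apply: eq_bigr => p _.
  under eq_bigr => s _ do rewrite mulmxA.
  by rewrite sign_average_cps; under eq_bigr => i _ do rewrite col_mulmx.
rewrite !avg ler_pM2l ?ltr0n ?expn_gt0 //; apply: ler_sum => I _.
have [cI|cI] := eqVneq #|I| S; last first.
  by rewrite !big1 // => i _; rewrite fibre_weight_card ?mul0r.
have [sP iP sQ iQ tPQ] := hPQ I cI.
rewrite -subr_ge0 -sumrB; under eq_bigr => i _ do rewrite -mulrBr.
have delta_ge0 : forall i, i \in I -> 0 <= sq (Q I *m col i Phi) - sq (P I *m col i Phi).
  by move=> i iI; rewrite subr_ge0 hQ // sq_proj_le.
have delta_sum : \sum_i (sq (Q I *m col i Phi) - sq (P I *m col i Phi)) = 0.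
  by rewrite sumrB (tight_frame_trace tf sQ iQ) (tight_frame_trace tf sP iP) tPQ subrr.
have [j0 j0I|allI] := pickP (fun j => j \notin I).
  apply: (weighted_sum_ge0 (w0 := fibre_weight I j0)) delta_ge0 delta_sum.
  - by move=> i iI; exact: fibre_weight_mono.
  - by move=> i iI; exact: fibre_weight_swap.
apply: (weighted_sum_ge0 (w0 := 0)) delta_ge0 delta_sum.
- by move=> i _; exact: fibre_weight_ge0.
- by move=> i iI; have := allI i; rewrite /= iI.
Qed.
End Averaging.

Section Independence.
Variable R : rcfType.

Definition gram d K (I : {set 'I_K}) (Psi : 'M[R]_(d, K)) : 'M[R]_#|I| :=
  (subcols Psi I)^T *m subcols Psi I.

Definition strictly_separated d K S (Phi : 'M[R]_(d, K)) (c : 'cV[R]_K) : Prop :=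
  forall (p : 'S_K) (s : {ffun 'I_K -> bool}),
    norm2 (projI (Ip S p) Phi *m (Phi *m cps c p s)) >
    \big[Num.max/0]_(I : {set 'I_K} | (#|I| <= S)%N && (I != Ip S p))
       norm2 (projI I Phi *m (Phi *m cps c p s)).

Definition sel_mx K (I : {set 'I_K}) : 'M[R]_(K, #|I|) :=
  \matrix_(a, j) (a == enum_val j)%:R.

Lemma subcolsE d K (Psi : 'M[R]_(d, K)) (I : {set 'I_K}) :
  subcols Psi I = Psi *m sel_mx I.
Proof.
apply/matrixP => a j; rewrite !mxE (bigD1 (enum_val j)) //= big1 ?addr0 => [|b bj].
  by rewrite mxE eqxx mulr1.
by rewrite mxE (negbTE bj) mulr0.
Qed.

Lemma sel_mx_supp K n (L : {set 'I_K}) (U : 'M[R]_(K, n)) :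
  (forall a b, a \notin L -> U a b = 0) -> sel_mx L *m ((sel_mx L)^T *m U) = U.
Proof.
move=> hU; apply/matrixP => a b; rewrite mxE.
have e1 : forall j, ((sel_mx L)^T *m U) j b = U (enum_val j) b.
  move=> j; rewrite mxE (bigD1 (enum_val j)) //= big1 ?addr0 => [|c cj].
    by rewrite !mxE eqxx mul1r.
  by rewrite !mxE (negbTE cj) mul0r.
under eq_bigr => j _ do rewrite e1 mxE.
case: (boolP (a \in L)) => aL.
  rewrite (bigD1 (enum_rank_in aL a)) //= enum_rankK_in // eqxx mul1r big1 ?addr0 // => j hj.
  case: eqP => [ej|]; last by rewrite mul0r.
  by case/eqP: hj; apply: enum_val_inj; rewrite enum_rankK_in // -ej.
rewrite hU // big1 // => j _; case: eqP => [ej|]; last by rewrite mul0r.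
by move: aL; rewrite ej enum_valP.
Qed.

Lemma dependency_of_singular_gram d K (Phi : 'M[R]_(d, K)) (I : {set 'I_K}) :
  gram I Phi \notin unitmx ->
  exists u : 'cV[R]_K, exists2 k : 'I_K,
    [/\ Phi *m u = 0 & forall a, a \notin I -> u a 0 = 0] & u k 0 != 0.
Proof.
rewrite unitmxE unitfE negbK => /det0P [v v0 hv].
have Xv : subcols Phi I *m v^T = 0.
  have : v *m (subcols Phi I)^T = 0.
    by apply: rv_sq0; rewrite trmx_mul trmxK mulmxA -(mulmxA v) hv mul0mx mxE.
  by move/(congr1 trmx); rewrite trmx_mul trmxK trmx0.
have [j vj] : exists j, v 0 j != 0.
  apply/existsP; apply: contraR v0 => /existsPn h; apply/eqP/rowP => j.
  by rewrite mxE; apply/eqP; rewrite -[_ == _]negbK h.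
exists (sel_mx I *m v^T), (enum_val j); first split.
- by rewrite mulmxA -subcolsE.
- move=> a aI; rewrite mxE big1 // => j' _; rewrite mxE.
  case: eqP => [ej|]; last by rewrite mul0r.
  by move: aI; rewrite ej enum_valP.
rewrite mxE (bigD1 j) //= big1 ?addr0 => [|j' hj']; first by rewrite !mxE eqxx mul1r.
by rewrite !mxE; case: eqP => [/enum_val_inj ej|]; [case/eqP: hj'|rewrite mul0r].
Qed.

(* Removing from L an atom k carrying a dependency Phi u = 0 supported in L
   does not change the span of the atoms, hence not the projection. *)
Lemma projI_drop_dependent d K (Phi : 'M[R]_(d, K)) (L : {set 'I_K})
    (u : 'cV[R]_K) (k : 'I_K) :
  Phi *m u = 0 -> (forall a, a \notin L -> u a 0 = 0) -> u k 0 != 0 ->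
  projI (L :\ k) Phi = projI L Phi.
Proof.
move=> Phiu usupp uk.
set J := L :\ k.
have JL : J \subset L := subsetDl L [set k].
have hJ : subcols Phi J = subcols Phi L *m ((sel_mx L)^T *m sel_mx J).
  rewrite !subcolsE -mulmxA sel_mx_supp // => a b aL; rewrite mxE.
  case: eqP => // ea; case/negP: aL; rewrite ea; apply: (subsetP JL); exact: enum_valP.
(* Eliminate atom k from the columns of sel_mx L using the dependency. *)
set V := sel_mx L - (u k 0)^-1 *: (u *m row k (sel_mx L)).
have PV : Phi *m V = Phi *m sel_mx L.
  by rewrite /V mulmxBr -scalemxAr mulmxA Phiu mul0mx scaler0 subr0.
have Vsupp : forall a b, a \notin J -> V a b = 0.
  move=> a b aJ; rewrite /V !mxE big_ord1 !mxE.
  have [->|ak] := eqVneq a k; first by rewrite mulrA mulVf // mul1r subrr.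
  have aL : a \notin L by move: aJ; rewrite !inE ak.
  rewrite (usupp a) // mul0r mulr0 subr0; case: eqP => // ea.
  by move: aL; rewrite ea enum_valP.
have hL : subcols Phi L = subcols Phi J *m ((sel_mx J)^T *m V).
  by rewrite !subcolsE -PV -mulmxA sel_mx_supp.
by rewrite /projI (pinv_proj_span hJ hL).
Qed.

(* Strict separation forces every set of at most S atoms of Phi to be
   linearly independent: otherwise some support I_p and I_p minus one atom
   would give the same projection. *)
Lemma separated_gram_unit d K S (Phi : 'M[R]_(d, K)) (c : 'cV[R]_K) :
  (S <= K)%N -> strictly_separated S Phi c ->
  forall I : {set 'I_K}, (#|I| <= S)%N -> gram I Phi \in unitmx.
Proof.
move=> SK sep I IS; apply: contraT => /dependency_of_singular_gram [u [k [Phiu usupp] uk]].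
have [p IL] := subset_Ip IS.
have uL : forall a, a \notin Ip S p -> u a 0 = 0.
  by move=> a aL; apply: usupp; apply: contra aL; apply: (subsetP IL).
have kL : k \in Ip S p by apply: contraR uk => /uL ->; rewrite eqxx.
have cJ : (#|Ip S p :\ k| <= S)%N.
  by apply: ltnW; rewrite -[X in (_ < X)%N](card_Ip p SK) proper_card ?properD1.
have JnL : Ip S p :\ k != Ip S p by apply/eqP => e; move: kL; rewrite -e !inE eqxx.
have := sep p [ffun => false]; move/bigmax_ltP => [_ /(_ _ (introT andP (conj cJ JnL)))].
by rewrite (projI_drop_dependent Phiu uL uk) ltxx.
Qed.
End Independence.

Lemma mul_lt_shrink (R : numFieldType) (a x : R) :
  0 <= a -> 0 < x -> a * (x / (a + 1)) < x.
Proof.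
move=> a0 x0; have pa : 0 < a + 1 by rewrite ltr_wpDl.
by rewrite mulrA ltr_pdivrMr // mulrC ltr_pM2l // ltrDl ltr01.
Qed.

Lemma inv_dist_lt (R : realFieldType) (x y e : R) : y != 0 -> 0 < e ->
  `|x - y| < `|y| / 2 -> `|x - y| < e * (`|y| * (`|y| / 2)) -> `|x^-1 - y^-1| < e.
Proof.
move=> y0 e0 h1 h2.
have ya : 0 < `|y| by rewrite normr_gt0.
have hy : `|y| <= `|x| + `|x - y|.
  by have := ler_normD x (y - x); rewrite addrC subrK distrC.
have hx : `|y| / 2 < `|x| by lra.
have x0 : x != 0.
  by rewrite -normr_gt0; apply: le_lt_trans hx; rewrite divr_ge0 // ltW.
have -> : x^-1 - y^-1 = (y - x) / (x * y) by field; rewrite x0 y0.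
rewrite normrM normfV normrM distrC ltr_pdivrMr ?mulr_gt0 ?normr_gt0 //.
apply: (lt_trans h2); rewrite ltr_pM2l // [X in _ < X]mulrC ltr_pM2l //.
Qed.

(* Continuity at Phi for the entrywise distance on d x K matrices, in the
   epsilon-delta form; this is the topology of local_max_on_D. *)
Section Continuity.
Variable R : rcfType.
Variables d K : nat.
Variable Phi : 'M[R]_(d, K).

Definition near (P : 'M[R]_(d, K) -> Prop) :=
  exists2 del : R, 0 < del &
    forall Psi : 'M[R]_(d, K), (forall i j, `|Psi i j - Phi i j| < del) -> P Psi.

Definition cont (F : 'M[R]_(d, K) -> R) :=
  forall e : R, 0 < e -> near (fun Psi => `|F Psi - F Phi| < e).

Definition mcont m n (M : 'M[R]_(d, K) -> 'M[R]_(m, n)) :=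
  forall i j, cont (fun Psi => M Psi i j).

Lemma near_mono (P Q : 'M[R]_(d, K) -> Prop) :
  (forall Psi, P Psi -> Q Psi) -> near P -> near Q.
Proof. by move=> PQ [del d0 H]; exists del => // Psi /H /PQ. Qed.

Lemma near_and (P Q : 'M[R]_(d, K) -> Prop) :
  near P -> near Q -> near (fun Psi => P Psi /\ Q Psi).
Proof.
move=> [d1 d10 H1] [d2 d20 H2]; exists (Num.min d1 d2); first by rewrite lt_min d10.
move=> Psi Hc; split; [apply: H1|apply: H2] => i j.
  by have := Hc i j; rewrite lt_min => /andP[].
by have := Hc i j; rewrite lt_min => /andP[].
Qed.

Lemma near_all (T : finType) (P : T -> 'M[R]_(d, K) -> Prop) :
  (forall x, near (P x)) -> near (fun Psi => forall x, P x Psi).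
Proof.
move=> H.
suff : near (fun Psi => forall x, x \in enum T -> P x Psi).
  by apply: near_mono => Psi HP x; apply: HP; rewrite mem_enum.
elim: (enum T) => [|a s IH]; first by exists 1 => // Psi _ x.
apply: near_mono (near_and (H a) IH) => Psi [Ha Hs] x.
by rewrite inE => /orP[/eqP->//|]; exact: Hs.
Qed.

Lemma near_lt F G : cont F -> cont G -> F Phi < G Phi ->
  near (fun Psi => F Psi < G Psi).
Proof.
move=> hF hG FG; have e0 : 0 < (G Phi - F Phi) / 2 by rewrite divr_gt0 // subr_gt0.
apply: near_mono (near_and (hF _ e0) (hG _ e0)) => Psi [].
by rewrite !ltr_norml => /andP[_ h1] /andP[h2 _]; lra.
Qed.

Lemma near_neq0 F : cont F -> F Phi != 0 -> near (fun Psi => F Psi != 0).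
Proof.
move=> hF F0; apply: near_mono (hF _ (_ : 0 < `|F Phi|)); last by rewrite normr_gt0.
by move=> Psi; apply: contraTneq => ->; rewrite sub0r normrN ltxx.
Qed.

Lemma cont_const (a : R) : cont (fun _ => a).
Proof. by move=> e e0; exists 1 => // Psi _; rewrite subrr normr0. Qed.

Lemma cont_entry i j : cont (fun Psi => Psi i j).
Proof. by move=> e e0; exists e. Qed.

Lemma cont_add F G : cont F -> cont G -> cont (fun Psi => F Psi + G Psi).
Proof.
move=> hF hG e e0; have e2 : 0 < e / 2 by rewrite divr_gt0.
apply: near_mono (near_and (hF _ e2) (hG _ e2)) => Psi [h1 h2].
have -> : F Psi + G Psi - (F Phi + G Phi) = (F Psi - F Phi) + (G Psi - G Phi).
  by ring.
by apply: le_lt_trans (ler_normD _ _) _; rewrite [e](splitr e) ltrD.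
Qed.

Lemma cont_mul F G : cont F -> cont G -> cont (fun Psi => F Psi * G Psi).
Proof.
move=> hF hG e e0.
have pa : 0 < `|F Phi| + 1 by rewrite ltr_wpDl.
have pb : 0 < `|G Phi| + 1 by rewrite ltr_wpDl.
have e1 : 0 < e / 2 / (`|G Phi| + 1) by rewrite !divr_gt0.
have e2 : 0 < Num.min 1 (e / 2 / (`|F Phi| + 1)) by rewrite lt_min ltr01 !divr_gt0.
apply: near_mono (near_and (hF _ e1) (hG _ e2)) => Psi [h1].
rewrite lt_min => /andP[h2 h3].
have -> : F Psi * G Psi - F Phi * G Phi =
          (F Psi - F Phi) * G Psi + F Phi * (G Psi - G Phi) by ring.
apply: le_lt_trans (ler_normD _ _) _; rewrite [e](splitr e) !normrM; apply: ltrD.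
  have hb : `|G Psi| <= `|G Phi| + 1.
    have := ler_normD (G Psi - G Phi) (G Phi); rewrite subrK => /le_trans; apply.
    by rewrite addrC lerD2l ltW.
  apply: le_lt_trans (ler_wpM2l (normr_ge0 _) hb) _.
  by rewrite -ltr_pdivlMr.
apply: le_lt_trans (mul_lt_shrink (normr_ge0 (F Phi)) (_ : 0 < e / 2)); last first.
  by rewrite divr_gt0.
by rewrite ler_wpM2l // ltW.
Qed.

Lemma cont_inv F : cont F -> F Phi != 0 -> cont (fun Psi => (F Psi)^-1).
Proof.
move=> hF F0 e e0.
have ya : 0 < `|F Phi| by rewrite normr_gt0.
have d1 : 0 < Num.min (`|F Phi| / 2) (e * (`|F Phi| * (`|F Phi| / 2))).
  by rewrite lt_min divr_gt0 //= mulr_gt0 // mulr_gt0 // divr_gt0.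
apply: near_mono (hF _ d1) => Psi; rewrite lt_min => /andP[h1 h2].
exact: inv_dist_lt.
Qed.

Lemma cont_big (I : finType) (P : pred I) (op : R -> R -> R) (idx : R)
    (F : I -> 'M[R]_(d, K) -> R) :
  (forall G H, cont G -> cont H -> cont (fun Psi => op (G Psi) (H Psi))) ->
  (forall i, cont (F i)) -> cont (fun Psi => \big[op/idx]_(i | P i) F i Psi).
Proof.
move=> cont_op hF; elim: (index_enum I) => [|a s IH].
  by move=> e e0; apply: near_mono (cont_const idx e0) => Psi; rewrite !big_nil.
move=> e e0; case: (boolP (P a)) => Pa.
  by apply: near_mono (cont_op _ _ (hF a) IH e e0) => Psi; rewrite !big_cons Pa.
by apply: near_mono (IH e e0) => Psi; rewrite !big_cons (negbTE Pa).
Qed.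

Lemma cont_sum (I : finType) (P : pred I) (F : I -> 'M[R]_(d, K) -> R) :
  (forall i, cont (F i)) -> cont (fun Psi => \sum_(i | P i) F i Psi).
Proof. exact: cont_big cont_add. Qed.

Lemma cont_prod (I : finType) (P : pred I) (F : I -> 'M[R]_(d, K) -> R) :
  (forall i, cont (F i)) -> cont (fun Psi => \prod_(i | P i) F i Psi).
Proof. exact: cont_big cont_mul. Qed.

Lemma mcont_id : mcont id.
Proof. by move=> i j; exact: cont_entry. Qed.

Lemma mcont_const m n (A : 'M[R]_(m, n)) : mcont (fun _ => A).
Proof. by move=> i j; exact: cont_const. Qed.

Lemma mcont_mul m n p (A : _ -> 'M[R]_(m, n)) (B : _ -> 'M[R]_(n, p)) :
  mcont A -> mcont B -> mcont (fun Psi => A Psi *m B Psi).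
Proof.
move=> hA hB i j e e0.
have := @cont_sum _ xpredT (fun k Psi => A Psi i k * B Psi k j)
  (fun k => cont_mul (hA i k) (hB k j)) e e0.
by apply: near_mono => Psi; rewrite !mxE.
Qed.

Lemma mcont_tr m n (A : _ -> 'M[R]_(m, n)) : mcont A -> mcont (fun Psi => (A Psi)^T).
Proof. by move=> hA i j e e0; apply: near_mono (hA j i e e0) => Psi; rewrite !mxE. Qed.

Lemma mcont_scale m n f (A : _ -> 'M[R]_(m, n)) :
  cont f -> mcont A -> mcont (fun Psi => f Psi *: A Psi).
Proof.
by move=> hf hA i j e e0; apply: near_mono (cont_mul hf (hA i j) e0) => Psi; rewrite !mxE.
Qed.

Lemma mcont_colsub m n n2 (f : 'I_n2 -> 'I_n) (A : _ -> 'M[R]_(m, n)) :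
  mcont A -> mcont (fun Psi => colsub f (A Psi)).
Proof. by move=> hA i j e e0; apply: near_mono (hA i (f j) e e0) => Psi; rewrite !mxE. Qed.

(* Determinant and adjugate are polynomial in the entries. *)
Lemma cont_det n (A : _ -> 'M[R]_n) : mcont A -> cont (fun Psi => \det (A Psi)).
Proof.
move=> hA e e0.
have := @cont_sum _ xpredT (fun (s : 'S_n) Psi => (-1) ^+ s * \prod_i A Psi i (s i))
  (fun s => cont_mul (cont_const _) (cont_prod xpredT (fun i => hA i (s i)))) e e0.
by apply: near_mono.
Qed.

Lemma mcont_adj n (A : _ -> 'M[R]_n) : mcont A -> mcont (fun Psi => \adj (A Psi)).
Proof.
case: n A => [|n] A hA i j; first by case: i.
have minor : mcont (fun Psi => row' j (col' i (A Psi))).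
  by move=> a b e e0; apply: near_mono (hA (lift j a) (lift i b) e e0) => Psi; rewrite !mxE.
move=> e e0; have := cont_mul (cont_const ((-1) ^+ (j + i))) (cont_det minor) e0.
by apply: near_mono => Psi; rewrite !mxE.
Qed.
End Continuity.

Lemma best_proj_le_support (R : rcfType) d K S (Psi : 'M[R]_(d, K)) y
    (J : {set 'I_K}) :
  (forall I : {set 'I_K}, (#|I| <= S)%N -> I != J ->
     sq (projI I Psi *m y) < sq (projI J Psi *m y)) ->
  best_proj S Psi y <= sq (projI J Psi *m y).
Proof.
move=> beat; apply/bigmax_leP; split; first exact: sq_ge0.
move=> I IS; rewrite norm2_sq; have [->//|IJ] := eqVneq I J.
exact/ltW/beat.
Qed.

Lemma support_le_best_proj (R : rcfType) d K S (Psi : 'M[R]_(d, K)) y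
    (J : {set 'I_K}) :
  (#|J| <= S)%N -> sq (projI J Psi *m y) <= best_proj S Psi y.
Proof. by move=> JS; rewrite -norm2_sq; apply: le_bigmax_cond. Qed.

Section ProjectionsNearPhi.
Variable R : rcfType.
Variables d K : nat.

Lemma projI_gram (I : {set 'I_K}) (Psi : 'M[R]_(d, K)) :
  gram I Psi \in unitmx -> projI I Psi = gram_proj (subcols Psi I).
Proof. exact: pinv_proj_gram. Qed.

Lemma projI_orth (I : {set 'I_K}) (Psi : 'M[R]_(d, K)) :
  gram I Psi \in unitmx ->
  [/\ (projI I Psi)^T = projI I Psi, projI I Psi *m projI I Psi = projI I Psi
    & \tr (projI I Psi) = #|I|%:R].
Proof.
move=> u; rewrite projI_gram //; split; first exact: gram_proj_sym.
  exact: gram_proj_idem.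
exact: gram_proj_tr.
Qed.

Lemma projI_fix_atom (I : {set 'I_K}) (Psi : 'M[R]_(d, K)) (i : 'I_K) :
  gram I Psi \in unitmx -> i \in I -> projI I Psi *m col i Psi = col i Psi.
Proof.
move=> u iI; have col_sub : col i Psi = col (enum_rank_in iI i) (subcols Psi I).
  by apply/colP => k; rewrite !mxE enum_rankK_in.
by rewrite col_sub -col_mulmx projI_gram // gram_proj_fix.
Qed.

(* The adjugate formula for the projection, visibly continuous in Psi. *)
Definition adj_proj (I : {set 'I_K}) (Psi : 'M[R]_(d, K)) : 'M[R]_d :=
  subcols Psi I *m ((\det (gram I Psi))^-1 *: \adj (gram I Psi)) *m (subcols Psi I)^T.

Lemma projI_adj (I : {set 'I_K}) (Psi : 'M[R]_(d, K)) :
  gram I Psi \in unitmx -> projI I Psi = adj_proj I Psi.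
Proof. by move=> u; rewrite projI_gram // /gram_proj /invmx -/(gram I Psi) u. Qed.

Variable Phi : 'M[R]_(d, K).

Lemma mcont_gram (I : {set 'I_K}) : mcont Phi (gram I).
Proof.
have hsub : mcont Phi (fun Psi => subcols Psi I) by apply: mcont_colsub; exact: mcont_id.
exact: mcont_mul (mcont_tr hsub) hsub.
Qed.

Lemma cont_sq_adj_proj (I : {set 'I_K}) (y : 'cV[R]_d) :
  \det (gram I Phi) != 0 -> cont Phi (fun Psi => sq (adj_proj I Psi *m y)).
Proof.
move=> dn.
have hsub : mcont Phi (fun Psi => subcols Psi I) by apply: mcont_colsub; exact: mcont_id.
have hP : mcont Phi (adj_proj I).
  apply: mcont_mul (mcont_tr hsub); apply: mcont_mul hsub _.
  apply: mcont_scale; last exact: mcont_adj (@mcont_gram I).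
  exact: cont_inv (cont_det (@mcont_gram I)) dn.
have hv := mcont_mul hP (mcont_const Phi y).
rewrite /sq; apply: cont_sum => k e e0.
by apply: near_mono (cont_mul (hv k 0) (hv k 0) e0) => Psi; rewrite !expr2.
Qed.

Variable S : nat.
Hypothesis unitPhi : forall I : {set 'I_K}, (#|I| <= S)%N -> gram I Phi \in unitmx.

Let det_gram_neq0 (I : {set 'I_K}) : (#|I| <= S)%N -> \det (gram I Phi) != 0.
Proof. by move=> IS; rewrite -unitfE -unitmxE unitPhi. Qed.

Lemma near_gram_unit :
  near Phi (fun Psi => forall I : {set 'I_K}, (#|I| <= S)%N -> gram I Psi \in unitmx).
Proof.
apply: near_all => I; have [IS|IS] := boolP (#|I| <= S)%N; last first.
  by exists 1 => // Psi _; rewrite (negbTE IS).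
apply: near_mono (near_neq0 (cont_det (@mcont_gram I)) (det_gram_neq0 IS)) => Psi h _.
by rewrite unitmxE unitfE.
Qed.

Lemma near_sq_proj_lt (I J : {set 'I_K}) (y : 'cV[R]_d) :
  (#|I| <= S)%N -> (#|J| <= S)%N ->
  sq (projI I Phi *m y) < sq (projI J Phi *m y) ->
  near Phi (fun Psi => sq (projI I Psi *m y) < sq (projI J Psi *m y)).
Proof.
move=> IS JS; rewrite !projI_adj ?unitPhi // => lt.
have cI := cont_sq_adj_proj y (det_gram_neq0 IS).
have cJ := cont_sq_adj_proj y (det_gram_neq0 JS).
apply: near_mono (near_and near_gram_unit (near_lt cI cJ lt)) => Psi [u].
by rewrite !projI_adj ?u.
Qed.

Lemma near_separated (c : 'cV[R]_K) : (S <= K)%N -> strictly_separated S Phi c ->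
  near Phi (fun Psi => forall (p : 'S_K) (s : {ffun 'I_K -> bool}) (I : {set 'I_K}),
    (#|I| <= S)%N -> I != Ip S p ->
    sq (projI I Psi *m (Phi *m cps c p s)) <
    sq (projI (Ip S p) Psi *m (Phi *m cps c p s))).
Proof.
move=> SK sep; apply: near_all => p; apply: near_all => s; apply: near_all => I.
have [/andP[IS IIp]|nI] := boolP ((#|I| <= S)%N && (I != Ip S p)); last first.
  by exists 1 => // Psi _ IS IIp; rewrite IS IIp in nI.
have lt : norm2 (projI I Phi *m (Phi *m cps c p s)) <
          norm2 (projI (Ip S p) Phi *m (Phi *m cps c p s)).
  by have := sep p s; move/bigmax_ltP => [_]; apply; rewrite IS IIp.
rewrite -(ltr_pXn2r (_ : 0 < 2)%N) ?nnegrE ?sqrtr_ge0 // !norm2_sq in lt.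
apply: near_mono (near_sq_proj_lt IS _ lt) => [Psi h _ _ //|].
by rewrite card_Ip.
Qed.
End ProjectionsNearPhi.

Theorem theorem5 (R : rcfType) (d K S : nat) (Phi : 'M[R]_(d, K))
  (c : 'cV[R]_K) :
  is_dict Phi ->
  tight_frame Phi (K%:R / d%:R) ->
  (1 <= S <= K)%N ->
  (forall i j : 'I_K, (i <= j)%N -> c j 0 <= c i 0) ->
  (forall i : 'I_K, 0 <= c i 0) ->
  norm2 c = 1 ->
  (forall (p : 'S_K) (s : {ffun 'I_K -> bool}),
     norm2 (projI (Ip S p) Phi *m (Phi *m cps c p s)) >
     \big[Num.max/0]_(I : {set 'I_K} | (#|I| <= S)%N && (I != Ip S p))
        norm2 (projI I Phi *m (Phi *m cps c p s))) ->
  local_max_on_D (objective S Phi c) Phi.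
Proof.
move=> dictPhi tf /andP[_ SK] c_decr c_ge0 _ sep; split => //.
have unitPhi := separated_gram_unit SK sep.
have [del del0 nearPsi] := near_and (near_gram_unit unitPhi) (near_separated unitPhi SK sep).
exists del => // Psi _ /nearPsi [unitPsi sepPsi].
rewrite /objective ler_pM2l ?invr_gt0 ?ltr0n ?muln_gt0 ?expn_gt0 ?fact_gt0 //.
(* Near Phi, the support I_p realises the maximum in the objective of Psi. *)
apply: (@le_trans _ _ (\sum_(p : 'S_K) \sum_(s : {ffun 'I_K -> bool})
    sq (projI (Ip S p) Psi *m (Phi *m cps c p s)))).
  by apply: ler_sum => p _; apply: ler_sum => s _; apply: best_proj_le_support; exact: sepPsi.
(* Averaging: P_{I_p}(Phi) captures at least as much as P_{I_p}(Psi). *)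
apply: le_trans (avg_ineq c_decr c_ge0 (P := fun I => projI I Psi)
  (Q := fun I => projI I Phi) SK tf _ _) _.
- move=> I cI; have IS : (#|I| <= S)%N by rewrite cI.
  have [sP iP tP] := projI_orth (unitPsi I IS); have [sQ iQ tQ] := projI_orth (unitPhi I IS).
  by split=> //; rewrite tP tQ.
- by move=> I cI i iI; apply: projI_fix_atom => //; apply: unitPhi; rewrite cI.
by apply: ler_sum => p _; apply: ler_sum => s _; apply: support_le_best_proj; rewrite card_Ip.
Qed.
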